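(* For any compilation chain and any trace relation ${\sim}\subseteq\mathit{Trace}_S\times\mathit{Trace}_T$, with existential and universal images $\tilde\tau,\tilde\sigma$ lifted to hyperproperties, the following are equivalent: (i) $\mathit{SCHP}^{\tilde\tau}$: for every source program $W$ and every subset-closed source hyperproperty $H_S$, if $W\models H_S$ then $W{\downarrow}\models \mathit{Cl}_\subseteq(\tilde\tau(H_S))$; (ii) $\mathit{CC}^{\sim}$; (iii) $\mathit{SCHP}^{\tilde\sigma}$: for every source program $W$ and every subset-closed target hyperproperty $H_T$, if $W\models \mathit{Cl}_\subseteq(\tilde\sigma(H_T))$ then $W{\downarrow}\models H_T$.
   Context: A compilation chain consists of a set of source (whole) programs $W$, target programs, sets $\mathit{Trace}_S$, $\mathit{Trace}_T$ of source and target traces, semantics relations $W\rightsquigarrow t$ (program $W$ can produce trace $t$) at both levels, and a compiler $W\mapsto W{\downarrow}$. The behavior of a program is $\mathit{beh}(W)=\{t\mid W\rightsquigarrow t\}$. A hyperproperty is a set of trace properties (sets of traces); $W\models H$ iff $\mathit{beh}(W)\in H$. $H$ is subset-closed iff $\pi\in H$ and $\pi'\subseteq\pi$ imply $\pi'\in H$. $\mathit{Cl}_\subseteq(H)=\{\pi\mid\exists\pi'\in H.\ \pi\subseteq\pi'\}$. The existential image of $\sim$ is $\tilde\tau(\pi)=\{t\mid\exists s.\ s\sim t\wedge s\in\pi\}$ and its universal image is $\tilde\sigma(\pi)=\{s\mid\forall t.\ s\sim t\Rightarrow t\in\pi\}$; they are lifted to hyperproperties by $\tilde\tau(H_S)=\{\tilde\tau(\pi)\mid\pi\in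 H_S\}$ and $\tilde\sigma(H_T)=\{\tilde\sigma(\pi)\mid\pi\in H_T\}$. $\mathit{CC}^{\sim}$ states: for every $W$ and $t$, if $W{\downarrow}\rightsquigarrow t$ then there is $s\sim t$ with $W\rightsquigarrow s$. *)

Set Implicit Arguments.

Record CompChain := {
  ProgS : Type; ProgT : Type;
  TraceS : Type; TraceT : Type;
  semS : ProgS -> TraceS -> Prop;
  semT : ProgT -> TraceT -> Prop;
  compile : ProgS -> ProgT
}.

Definition prop (T : Type) := T -> Prop.
Definition hprop (T : Type) := prop T -> Prop.

Definition subset {T} (p q : prop T) : Prop := forall t, p t -> q t.
Definition seteq {T} (p q : prop T) : Prop := forall t, p t <-> q t.

Definition behS {C : CompChain} (W : ProgS C) : prop (TraceS C) := semS C W.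
Definition behT {C : CompChain} (W : ProgT C) : prop (TraceT C) := semT C W.

Definition satS {C : CompChain} (W : ProgS C) (H : hprop (TraceS C)) := H (behS W).
Definition satT {C : CompChain} (W : ProgT C) (H : hprop (TraceT C)) := H (behT W).

Definition subset_closed {T} (H : hprop T) : Prop :=
  forall p p', H p -> subset p' p -> H p'.

Definition Cl_sub {T} (H : hprop T) : hprop T :=
  fun p => exists p', H p' /\ subset p p'.

Definition tau_img {S T} (rel : S -> T -> Prop) (p : prop S) : prop T :=
  fun t => exists s, rel s t /\ p s.
Definition sigma_img {S T} (rel : S -> T -> Prop) (p : prop T) : prop S :=
  fun s => forall t, rel s t -> p t.

(* liftings to hyperproperties: images of sets of sets (set equality is extensional) *)
Definition tau_hyp {S T} (rel : S -> T -> Prop) (H : hprop S) : hprop T :=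
  fun q => exists p, H p /\ seteq q (tau_img rel p).
Definition sigma_hyp {S T} (rel : S -> T -> Prop) (H : hprop T) : hprop S :=
  fun q => exists p, H p /\ seteq q (sigma_img rel p).

Definition SCHP_tau (C : CompChain) (rel : TraceS C -> TraceT C -> Prop) : Prop :=
  forall (W : ProgS C) (HS : hprop (TraceS C)), subset_closed HS ->
    satS W HS -> satT (compile C W) (Cl_sub (tau_hyp rel HS)).

Definition CC (C : CompChain) (rel : TraceS C -> TraceT C -> Prop) : Prop :=
  forall (W : ProgS C) (t : TraceT C), semT C (compile C W) t ->
    exists s, rel s t /\ semS C W s.

Definition SCHP_sigma (C : CompChain) (rel : TraceS C -> TraceT C -> Prop) : Prop :=
  forall (W : ProgS C) (HT : hprop (TraceT C)), subset_closed HT ->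
    satS W (Cl_sub (sigma_hyp rel HT)) -> satT (compile C W) HT.


(* CC says beh(W downarrow) <= tau(beh W).  Membership in Cl(tau(H_S)) only
   asks for beh(W downarrow) <= tau(p) with p in H_S, and p := beh W works.  By
   the adjunction tau(p) <= q <-> p <= sigma(q), membership of beh W in
   Cl(sigma(H_T)) yields tau(beh W) <= q for some q in H_T, and subset-closure
   of H_T finishes.  Conversely, SCHP instantiated with the subset-closed
   powerset of beh W (resp. of tau(beh W)) gives back CC. *)

Section Powerset.

Context {X : Type}.

Lemma subset_refl (p : prop X) : subset p p.
Proof. intros x Hx; exact Hx. Qed.

Lemma subset_trans {p q r : prop X} : subset p q -> subset q r -> subset p r.
Proof. intros Hpq Hqr x Hx; apply Hqr, Hpq, Hx. Qed.

Definition powerset (P : prop X) : hprop X := fun p => subset p P.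

Lemma subset_closed_powerset (P : prop X) : subset_closed (powerset P).
Proof. intros p p' HpP Hp'p; exact (subset_trans Hp'p HpP). Qed.

End Powerset.

Section Images.

Context {S T : Type} (rel : S -> T -> Prop).

Lemma tau_img_mono {p q : prop S} :
  subset p q -> subset (tau_img rel p) (tau_img rel q).
Proof. intros Hpq t [s [Hst Hs]]; exists s; split; [exact Hst | apply Hpq, Hs]. Qed.

Lemma tau_sigma_adjoint (p : prop S) (q : prop T) :
  subset (tau_img rel p) q <-> subset p (sigma_img rel q).
Proof.
  split.
  - intros Htau s Hs t Hst; apply Htau; exists s; split; assumption.
  - intros Hsigma t [s [Hst Hs]]; exact (Hsigma s Hs t Hst).
Qed.

Lemma Cl_sub_tau_hypE (H : hprop S) (q : prop T) :
  Cl_sub (tau_hyp rel H) q <-> exists p, H p /\ subset q (tau_img rel p).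
Proof.
  split.
  - intros [q' [[p [Hp Heq]] Hqq']].
    exists p; split; [exact Hp |].
    intros t Ht; apply Heq, Hqq', Ht.
  - intros [p [Hp Hq]].
    exists (tau_img rel p); split; [| exact Hq].
    exists p; split; [exact Hp | intro t; tauto].
Qed.

Lemma Cl_sub_sigma_hypE (H : hprop T) (p : prop S) :
  Cl_sub (sigma_hyp rel H) p <-> exists q, H q /\ subset p (sigma_img rel q).
Proof.
  split.
  - intros [p' [[q [Hq Heq]] Hpp']].
    exists q; split; [exact Hq |].
    intros s Hs; apply Heq, Hpp', Hs.
  - intros [q [Hq Hp]].
    exists (sigma_img rel q); split; [| exact Hp].
    exists q; split; [exact Hq | intro s; tauto].
Qed.

End Images.

Section Preservation.

Variable C : CompChain.
Variable rel : TraceS C -> TraceT C -> Prop.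

Lemma CC_iff_beh_subset :
  CC C rel <-> forall W, subset (behT (compile C W)) (tau_img rel (behS W)).
Proof. split; intros HCC W t Ht; exact (HCC W t Ht). Qed.

Lemma CC_SCHP_tau : CC C rel -> SCHP_tau C rel.
Proof.
  intros HCC W HS _ HW.
  apply Cl_sub_tau_hypE.
  exists (behS W); split; [exact HW |].
  exact (proj1 CC_iff_beh_subset HCC W).
Qed.

Lemma SCHP_tau_CC : SCHP_tau C rel -> CC C rel.
Proof.
  intros Htau; apply CC_iff_beh_subset; intros W.
  destruct (proj1 (Cl_sub_tau_hypE _ _ _)
              (Htau W (powerset (behS W)) (subset_closed_powerset _)
                 (subset_refl _)))
    as [p [Hp Hbeh]].
  exact (subset_trans Hbeh (tau_img_mono rel Hp)).
Qed.

Lemma CC_SCHP_sigma : CC C rel -> SCHP_sigma C rel.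
Proof.
  intros HCC W HT Hclosed HW.
  destruct (proj1 (Cl_sub_sigma_hypE _ _ _) HW) as [q [Hq Hbeh]].
  apply (Hclosed q); [exact Hq |].
  apply (subset_trans (proj1 CC_iff_beh_subset HCC W)).
  exact (proj2 (tau_sigma_adjoint _ _ _) Hbeh).
Qed.

Lemma SCHP_sigma_CC : SCHP_sigma C rel -> CC C rel.
Proof.
  intros Hsigma; apply CC_iff_beh_subset; intros W.
  apply (Hsigma W (powerset (tau_img rel (behS W)))).
  - apply subset_closed_powerset.
  - apply Cl_sub_sigma_hypE.
    exists (tau_img rel (behS W)); split; [apply subset_refl |].
    apply tau_sigma_adjoint, subset_refl.
Qed.

End Preservation.

Theorem theorem2p11 (C : CompChain) (rel : TraceS C -> TraceT C -> Prop) :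
  (SCHP_tau C rel <-> CC C rel) /\ (CC C rel <-> SCHP_sigma C rel).
Proof.
  split; split.
  - apply SCHP_tau_CC.
  - apply CC_SCHP_tau.
  - apply CC_SCHP_sigma.
  - apply SCHP_sigma_CC.
Qed.
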